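(* Let $G$ be an undirected graph, let $s,\Delta_s$ be positive integers, and let $D\subset V(G)$ be a subset of vertices. If there exists an $(s,\Delta_s)$-dissolution $(D,z)$ for $G$ (with this set $D$), then such a dissolution can be found by computing a maximum flow in a flow network with $|V(G)|+2$ nodes and $|E(G)|+2|V(G)|$ arcs in which every arc capacity is either $s$ or $\Delta_s$.
   Context: For $V'\subseteq V(G)$ let $Z(V',G):=\{(x,y)\mid x\in V',\ y\in V(G)\setminus V',\ \{x,y\}\in E(G)\}$. For positive integers $s,\Delta_s$, an $(s,\Delta_s)$-dissolution for $G$ is a pair $(D,z)$ with $D\subset V(G)$ and $z\colon Z(D,G)\to\{0,\dots,s\}$ such that (a) for every $v'\in D$: $\sum_{(v',v)\in Z(D,G)} z(v',v)=s$, and (b) for every $v\in V(G)\setminus D$: $\sum_{(v',v)\in Z(D,G)} z(v',v)=\Delta_s$. *)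

From mathcomp Require Import all_boot all_algebra.
Set Implicit Arguments. Unset Strict Implicit. Unset Printing Implicit Defensive.

(* A simple undirected graph: vertex type T (finite), adjacency e (symmetric,
   irreflexive). Its edge set E(G) as a set of 2-element vertex sets. *)
Definition edges (T : finType) (e : rel T) : {set {set T}} :=
  [set [set x; y] | x in T, y in T & e x y].

(* (s, Ds)-dissolution (D, z): z is given as a function T -> T -> nat, of which
   only its values on Z(D,G) = {(x,y) | x in D, y notin D, {x,y} in E} matter. *)
Definition is_dissolution (T : finType) (e : rel T) (s Ds : nat)
    (D : {set T}) (z : T -> T -> nat) : Prop :=
  [/\ (forall x y, x \in D -> y \notin D -> e x y -> z x y <= s),
      (forall x, x \in D -> \sum_(y | (y \notin D) && e x y) z x y = s)
    & (forall y, y \notin D -> \sum_(x | (x \in D) && e x y) z x y = Ds)].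

(* General flow networks with nat capacities; cap u w = 0 means "no arc". *)
Section Flow.
Variable N : finType.

Definition arcs (cap : N -> N -> nat) : {set N * N} :=
  [set a | 0 < cap a.1 a.2].

Definition is_flow (src snk : N) (cap f : N -> N -> nat) : Prop :=
  (forall u w, f u w <= cap u w) /\
  (forall v, v != src -> v != snk -> \sum_u f u v = \sum_w f v w).

Definition flow_value (src : N) (f : N -> N -> nat) : int :=
  (Posz (\sum_w f src w) - Posz (\sum_u f u src))%R.

Definition is_max_flow (src snk : N) (cap f : N -> N -> nat) : Prop :=
  is_flow src snk cap f /\
  forall g, is_flow src snk cap g -> (flow_value src g <= flow_value src f)%R.
End Flow.

(* Nodes of the network: None = source, Some None = sink, Some (Some v) = v. *)
Definition node (T : finType) := option (option T).

Definition diss_cap (T : finType) (e : rel T) (s Ds : nat) (D : {set T})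
    (u w : node T) : nat :=
  match u, w with
  | None, Some (Some v) => if v \in D then s else 0
  | Some (Some v), Some None => if v \notin D then Ds else 0
  | Some (Some x), Some (Some y) =>
      if [&& x \in D, y \notin D & e x y] then s else 0
  | _, _ => 0
  end.

Definition flow_to_z (T : finType) (f : node T -> node T -> nat) : T -> T -> nat :=
  fun x y => f (Some (Some x)) (Some (Some y)).

(* A dissolution is exactly an integral flow of value s|D| that saturates every
   source arc [src -> x] (x in D) and every sink arc [y -> snk] (y notin D).
   Any dissolution z yields such a flow, hence a maximum flow has value s|D|
   and saturates the source arcs. Conservation then gives the out-degree
   condition at every x in D, and double counting the cut gives
   s|D| = Ds|V \ D|, which forces the sink arcs to be saturated too. *)
From mathcomp Require Import all_boot all_algebra.

Set Implicit Arguments.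
Unset Strict Implicit.
Unset Printing Implicit Defensive.

Lemma big_option (R : Type) (idx : R) (op : Monoid.com_law idx)
    (T : finType) (F : option T -> R) :
  \big[op/idx]_(x : option T) F x = op (F None) (\big[op/idx]_(x : T) F (Some x)).
Proof.
rewrite (bigD1 None) //=; congr (op _ _).
rewrite (reindex_omap Some (fun x => x)) //=; last by case.
by apply: eq_bigl => x; rewrite eqxx.
Qed.

Lemma eq_of_leq_sum (I : finType) (P : pred I) (a b : I -> nat) :
  (forall i, P i -> a i <= b i) -> \sum_(i | P i) b i <= \sum_(i | P i) a i ->
  forall i, P i -> a i = b i.
Proof.
move=> le_ab le_sum i Pi.
have /leqif_sum/leqifP : forall j, P j -> a j <= b j ?= iff (a j == b j).
  by move=> j Pj; apply/leqif_eq/le_ab.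
case: ifP => [/forall_inP/(_ i Pi)/eqP // | _].
by rewrite ltnNge le_sum.
Qed.

Lemma card_node (T : finType) : #|[set: node T]| = #|T| + 2.
Proof. by rewrite cardsT !card_option addn2. Qed.

Lemma sum_node (T : finType) (h : node T -> nat) :
  \sum_u h u = h None + h (Some None) + \sum_v h (Some (Some v)).
Proof. by rewrite !big_option -addnA. Qed.

Section DissolutionNetwork.

Variables (T : finType) (e : rel T) (s Ds : nat) (D : {set T}).

Local Notation cap := (diss_cap e s Ds D).
Local Notation src := (None : node T).
Local Notation snk := (Some None : node T).
Local Notation vx v := (Some (Some v) : node T).

Definition cut_pairs : {set T * T} :=
  [set p | [&& p.1 \in D, p.2 \notin D & e p.1 p.2]].

(* A cut pair is oriented from D to its complement, so it is recovered from
   the unordered edge it spans. *)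
Lemma card_cut_pairs : #|cut_pairs| <= #|edges e|.
Proof.
pose edge_of (p : T * T) := [set p.1; p.2].
have inj : {in cut_pairs &, injective edge_of}.
  move=> [x1 y1] [x2 y2]; rewrite !inE /= => /and3P[x1D y1D _] /and3P[x2D y2D _].
  rewrite /edge_of => E.
  have /set2P[hx|hx] : x1 \in [set x2; y2] by rewrite -E set21.
    have /set2P[hy|->] : y1 \in [set x2; y2] by rewrite -E set22.
      by move: y1D; rewrite hy x2D.
    by rewrite hx.
  by move: y2D; rewrite -hx x1D.
rewrite -(card_in_imset inj); apply/subset_leq_card/subsetP => E.
case/imsetP=> -[x y]; rewrite inE /= => /and3P[_ _ exy] ->.
by apply: imset2_f; rewrite ?inE.
Qed.

Lemma arcs_diss_cap_sub :
  arcs cap \subset [set (src, vx v) | v in D] :|: [set (vx v, snk) | v in ~: D]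
                   :|: [set (vx p.1, vx p.2) | p in cut_pairs].
Proof.
apply/subsetP => -[[[u|]|] [[w|]|]]; rewrite inE //=.
- case: ifP => // cut_uw _; rewrite !inE; apply/orP; right.
  by apply/imsetP; exists (u, w); rewrite ?inE.
- case: ifP => // uD _; rewrite !inE; apply/orP; left; apply/orP; right.
  by apply/imsetP; exists u; rewrite ?inE.
- case: ifP => // wD _; rewrite !inE; apply/orP; left; apply/orP; left.
  by apply/imsetP; exists w.
Qed.

Lemma card_arcs_diss_cap : #|arcs cap| <= #|edges e| + 2 * #|T|.
Proof.
apply: leq_trans (subset_leq_card arcs_diss_cap_sub) _.
apply: leq_trans (leq_card_setU _ _).1 _.
rewrite [leqRHS]addnC leq_add //; last first.
  exact: leq_trans (leq_imset_card _ _) card_cut_pairs.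
apply: leq_trans (leq_card_setU _ _).1 (leq_trans _ (leq_pmull #|T| (ltn0Sn 1))).
by rewrite -(cardsC D) leq_add ?leq_imset_card.
Qed.

Lemma diss_cap_arc (u w : node T) :
  (u, w) \in arcs cap -> cap u w = s \/ cap u w = Ds.
Proof.
by rewrite inE; case: u w => [[u|]|] [[w|]|] //=; case: ifP => _; auto.
Qed.

Lemma sum_cut_exchange (z : T -> T -> nat) :
  \sum_(y | y \notin D) \sum_(x | (x \in D) && e x y) z x y =
  \sum_(x | x \in D) \sum_(y | (y \notin D) && e x y) z x y.
Proof.
rewrite (exchange_big_dep (fun x => x \in D)) /=; last by move=> y x _ /andP[].
by apply: eq_bigr => x xD; apply: eq_bigl => y; rewrite xD.
Qed.

Lemma dissolution_balance (z : T -> T -> nat) :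
  is_dissolution e s Ds D z ->
  \sum_(y | y \notin D) Ds = \sum_(x | x \in D) s.
Proof.
case=> _ out_s in_Ds.
by rewrite -(eq_bigr _ in_Ds) sum_cut_exchange; apply: eq_bigr.
Qed.

Definition dissolution_flow (z : T -> T -> nat) (u w : node T) : nat :=
  match u, w with
  | Some (Some x), Some (Some y) =>
      if [&& x \in D, y \notin D & e x y] then z x y else 0
  | _, _ => cap u w
  end.

Lemma dissolution_flowP (z : T -> T -> nat) :
  is_dissolution e s Ds D z -> is_flow src snk cap (dissolution_flow z).
Proof.
case=> z_le out_s in_Ds; split.
  move=> [[u|]|] [[w|]|] //=; case: ifP => // /and3P[uD wD euw].
  exact: z_le.
move=> [[v|]|] // _ _; rewrite !sum_node /=.
case vD: (v \in D) => /=.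
  rewrite big1 ?addn0; last by move=> x _; rewrite andbF.
  by rewrite -(out_s v vD) [LHS]big_mkcond.
by rewrite big1_eq -(in_Ds v (negbT vD)) [in RHS]big_mkcond !add0n addn0.
Qed.

Section FlowInNetwork.

Variable f : node T -> node T -> nat.
Hypothesis f_flow : is_flow src snk cap f.

Local Notation F x y := (f (vx x) (vx y)).

Lemma capped_flow0 (u w : node T) : cap u w = 0 -> f u w = 0.
Proof. by move=> cap0; apply/eqP; rewrite -leqn0 -cap0; apply: f_flow.1. Qed.

Lemma flow_value_capped : flow_value src f = Posz (\sum_v f src (vx v)).
Proof.
rewrite /flow_value.
have -> : \sum_u f u src = 0.
  by apply: big1 => u _; apply: capped_flow0; case: u => [[]|].
by rewrite sum_node !(capped_flow0 (u := src)) // GRing.subr0.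
Qed.

Lemma flow_off_cut (x y : T) : ~~ [&& x \in D, y \notin D & e x y] -> F x y = 0.
Proof. by move=> not_cut; apply: capped_flow0; rewrite /= (negbTE not_cut). Qed.

Lemma flow_conservation_vertex (v : T) :
  f src (vx v) + \sum_x F x v = f (vx v) snk + \sum_y F v y.
Proof.
have := f_flow.2 (vx v) isT isT; rewrite !sum_node.
by rewrite [f snk _]capped_flow0 // [f _ src]capped_flow0 // addn0 add0n.
Qed.

Lemma flow_out_of_D (x : T) : x \in D ->
  \sum_(y | (y \notin D) && e x y) F x y = f src (vx x).
Proof.
move=> xD; have := flow_conservation_vertex x.
rewrite big1; last by move=> y _; rewrite flow_off_cut // negb_and xD orbT.
rewrite [f _ snk]capped_flow0 /=; last by rewrite xD.
rewrite addn0 add0n => ->; rewrite big_mkcond; apply: eq_bigr => y _.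
by case: ifP => // not_cut; rewrite flow_off_cut // xD not_cut.
Qed.

Lemma flow_into_complement (y : T) : y \notin D ->
  \sum_(x | (x \in D) && e x y) F x y = f (vx y) snk.
Proof.
move=> yD; have := flow_conservation_vertex y.
rewrite [f src _]capped_flow0 /=; last by rewrite (negbTE yD).
rewrite [X in _ = _ + X]big1; last by move=> x _; rewrite flow_off_cut // (negbTE yD).
rewrite add0n addn0 => <-; rewrite big_mkcond; apply: eq_bigr => x _.
case: ifP => // not_cut; rewrite flow_off_cut //.
by apply: contraFN not_cut => /and3P[-> _ ->].
Qed.

End FlowInNetwork.

Lemma max_flow_saturates_source (z : T -> T -> nat) (f : node T -> node T -> nat) :
  is_dissolution e s Ds D z -> is_max_flow src snk cap f ->
  forall v, f src (vx v) = cap src (vx v).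
Proof.
move=> diss [f_flow f_max] v; have g_flow := dissolution_flowP diss.
have := f_max _ g_flow; rewrite !flow_value_capped // lez_nat => le_sum.
apply: (eq_of_leq_sum (P := xpredT) (a := fun w => f src (vx w))
  (b := fun w => cap src (vx w))) => // w _; exact: f_flow.1.
Qed.

Lemma max_flow_dissolution (z : T -> T -> nat) (f : node T -> node T -> nat) :
  is_dissolution e s Ds D z -> is_max_flow src snk cap f ->
  is_dissolution e s Ds D (flow_to_z f).
Proof.
move=> diss f_max; have f_flow := f_max.1.
have sat := max_flow_saturates_source diss f_max.
have out_s x : x \in D -> \sum_(y | (y \notin D) && e x y) flow_to_z f x y = s.
  by move=> xD; rewrite (flow_out_of_D f_flow xD) sat /= xD.
(* The sink receives everything leaving D, i.e. s|D|, which by the balance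
   of the given dissolution is the total sink capacity Ds|V \ D|. *)
have sink_Ds : forall y, y \notin D -> f (vx y) snk = Ds.
  apply: (eq_of_leq_sum (b := fun _ => Ds)).
    by move=> y yD; have := f_flow.1 (vx y) snk; rewrite /= yD.
  rewrite (dissolution_balance diss) -(eq_bigr _ out_s) -sum_cut_exchange.
  by rewrite (eq_bigr _ (flow_into_complement f_flow)).
split => [x y xD yD exy | // | y yD].
  by have := f_flow.1 (vx x) (vx y); rewrite /= xD yD exy.
by rewrite /flow_to_z (flow_into_complement f_flow yD) sink_Ds.
Qed.

End DissolutionNetwork.

Theorem corollary1 (T : finType) (e : rel T)
    (e_sym : symmetric e) (e_irr : irreflexive e)
    (s Ds : nat) (s_pos : 0 < s) (Ds_pos : 0 < Ds) (D : {set T}) :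
  (exists z, is_dissolution e s Ds D z) ->
  [/\ #|[set: node T]| = #|T| + 2,
      #|arcs (diss_cap e s Ds D)| <= #|edges e| + 2 * #|T|,
      (forall u w, (u, w) \in arcs (diss_cap e s Ds D) ->
         diss_cap e s Ds D u w = s \/ diss_cap e s Ds D u w = Ds)
    & forall f, is_max_flow None (Some None) (diss_cap e s Ds D) f ->
         is_dissolution e s Ds D (flow_to_z f)].
Proof.
case=> z diss; split.
- exact: card_node.
- exact: card_arcs_diss_cap.
- exact: diss_cap_arc.
- by move=> f; apply: max_flow_dissolution diss.
Qed.
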